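(* Let $S$ be a semiring satisfying the standing assumptions below. Every basis $\{\beta_1,\dots,\beta_n\}$ of $S^n$ consists of vectors each of which has exactly one nonzero entry, and that nonzero entry is a unit of $S$; that is, each $\beta_i$ is of the form $(0,\dots,0,a_i,0,\dots,0)$ with $a_i \in U(S)$.
   Context: A semiring $(S,+,\cdot)$ here means: $(S,+)$ is a commutative monoid with zero $0$, $(S,\cdot)$ is a commutative monoid with identity $1$, multiplication distributes over addition, and $0$ is absorbing. Standing assumptions on $S$: $S$ is additively idempotent ($a+a=a$), multiplicatively cancellative (for every nonzero $a$, $ba=ca$ implies $b=c$), and additively unit irreducible (if $a+b$ is a unit then $a$ or $b$ is a unit). $U(S)$ is the set of units of $S$. $S^n$ is the semimodule of all $1\times n$ matrices over $S$ (componentwise addition and scalar multiplication). A set $D$ is linearly independent if no $x\in D$ lies in the set of finite $S$-linear combinations of $D\setminus\{x\}$; a basis is a linearly independent spanning set. *)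

From HB Require Import structures.
From mathcomp Require Import all_boot all_order all_algebra.
Set Implicit Arguments. Unset Strict Implicit. Unset Printing Implicit Defensive.
Import GRing.Theory.
Local Open Scope ring_scope.

(* Commutative semiring (0 absorbing, commutative +, commutative * with 1):
   a MathComp comPzSemiRingType (possibly trivial). *)

Definition sr_unit (S : comPzSemiRingType) (a : S) : Prop := exists b : S, a * b = 1.

Definition add_idempotent (S : comPzSemiRingType) : Prop := forall a : S, a + a = a.

Definition mul_cancellative (S : comPzSemiRingType) : Prop :=
  forall a b c : S, a != 0 -> b * a = c * a -> b = c.

Definition add_unit_irreducible (S : comPzSemiRingType) : Prop :=
  forall a b : S, sr_unit (a + b) -> sr_unit a \/ sr_unit b.

Definition in_span (S : comPzSemiRingType) (n : nat) (D : 'rV[S]_n -> Prop)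
    (v : 'rV[S]_n) : Prop :=
  exists (l : seq 'rV[S]_n) (c : nat -> S),
    (forall x, x \in l -> D x) /\ v = \sum_(i < size l) c i *: nth 0 l i.

Definition lin_indep (S : comPzSemiRingType) (n : nat) (D : 'rV[S]_n -> Prop) : Prop :=
  forall x, D x -> ~ in_span (fun y => D y /\ y <> x) x.

Definition is_basis (S : comPzSemiRingType) (n : nat) (D : 'rV[S]_n -> Prop) : Prop :=
  lin_indep D /\ forall v, in_span D v.

From HB Require Import structures.
From mathcomp Require Import all_boot all_order all_algebra.
Set Implicit Arguments. Unset Strict Implicit. Unset Printing Implicit Defensive.
Import GRing.Theory.
Local Open Scope ring_scope.

(* Writing the k-th standard vector as a combination of basis vectors, its
   entry 1 = sum_m c_m b_m(k) is a unit, so by additive unit irreducibility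
   some summand c_m b_m(k) is a unit; all other entries sum to 0, and an
   additively idempotent semiring is zero-sum free, so c_m b_m(k') = 0 and
   hence b_m(k') = 0 for k' <> k.  Thus every standard direction is carried
   by some basis vector with a single unit entry; distinct directions need
   distinct basis vectors, and since there are n of each, every basis vector
   is of this form. *)

Section SemiringFacts.

Variable S : comPzSemiRingType.

Lemma sr_unitMl (a b : S) : sr_unit (a * b) -> sr_unit a.
Proof. by case=> c abc1; exists (b * c); rewrite mulrA. Qed.

Lemma sr_unit_neq0 (a : S) : (1 : S) != 0 -> sr_unit a -> a != 0.
Proof. by move=> S_nt [b ab1]; apply: contraNneq S_nt => a0; rewrite -ab1 a0 mul0r. Qed.

Hypothesis S_idem : add_idempotent S.

Lemma addr_eq0l (a b : S) : a + b = 0 -> a = 0.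
Proof. by move=> ab0; rewrite -[a]addr0 -ab0 addrA S_idem. Qed.

Lemma sum_eq0_term (I : finType) (F : I -> S) : \sum_i F i = 0 -> forall i, F i = 0.
Proof. by move=> F0 i; rewrite (bigD1 i) //= in F0; apply: addr_eq0l F0. Qed.

Hypothesis S_irr : add_unit_irreducible S.
Hypothesis S_nt : (1 : S) != 0.

Lemma sr_unit_sum (I : eqType) (r : seq I) (F : I -> S) :
  sr_unit (\sum_(i <- r) F i) -> exists2 i, i \in r & sr_unit (F i).
Proof.
elim: r => [|x r IHr]; rewrite ?big_nil ?big_cons.
  by move=> /(sr_unit_neq0 S_nt); rewrite eqxx.
case/S_irr => [ux | /IHr[i ir ui]]; first by exists x; rewrite ?mem_head.
by exists i; rewrite // inE ir orbT.
Qed.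

Definition unit_delta (n : nat) (v : 'rV[S]_n) (k : 'I_n) : Prop :=
  sr_unit (v 0 k) /\ forall k', k' != k -> v 0 k' = 0.

Lemma unit_delta_inj (n : nat) (v : 'rV[S]_n) (k k' : 'I_n) :
  unit_delta v k -> unit_delta v k' -> k = k'.
Proof.
move=> [uk _] [_ v0]; apply/eqP; apply: contraT => kk'.
by move: (sr_unit_neq0 S_nt uk); rewrite v0 ?eqxx.
Qed.

Lemma delta_combination_summand (n : nat) (l : seq 'rV[S]_n) (c : nat -> S)
    (k : 'I_n) :
  delta_mx 0 k = \sum_(m < size l) c m *: l`_m ->
  exists2 v, v \in l & unit_delta v k.
Proof.
move=> deltaE.
have entryE k' : \sum_(m < size l) c m * l`_m 0 k' = (k' == k)%:R.
  have := congr1 (fun v : 'rV[S]_n => v 0 k') deltaE.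
  by rewrite /= mxE summxE eqxx => ->; apply: eq_bigr => m _; rewrite mxE.
have [m _ [d cd1]] : exists2 m, m \in index_enum 'I_(size l) & sr_unit (c m * l`_m 0 k).
  by apply: sr_unit_sum; rewrite entryE eqxx; exists 1; rewrite mulr1.
exists l`_m; first exact: mem_nth.
split=> [|k' k'k]; first by apply: (@sr_unitMl _ (c m)); rewrite mulrC; exists d.
have := entryE k'; rewrite (negbTE k'k) => /sum_eq0_term/(_ m) cl0.
by rewrite -[_ 0 k']mul1r -cd1 mulrAC -(mulrA (c m)) (mulrC (l`_m 0 k)) mulrA cl0 !mul0r.
Qed.

Lemma spanning_unit_delta (n : nat) (D : 'rV[S]_n -> Prop) (k : 'I_n) :
  (forall v, in_span D v) -> exists v, D v /\ unit_delta v k.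
Proof.
move=> spanD; have [l [c [lD deltaE]]] := spanD (delta_mx 0 k).
by have [v /lD Dv vk] := delta_combination_summand deltaE; exists v.
Qed.

End SemiringFacts.

Lemma lin_indep_nontrivial (S : comPzSemiRingType) (n : nat)
    (D : 'rV[S]_n -> Prop) (x : 'rV[S]_n) :
  lin_indep D -> D x -> (1 : S) != 0.
Proof.
move=> indepD Dx; apply/negP => /eqP S_triv; apply: (indepD x Dx).
exists [::], (fun _ => 0); split=> //; rewrite big_ord0.
by apply/matrixP => i j; rewrite -[x i j]mulr1 S_triv mulr0 mxE.
Qed.

Theorem corollary2p5 (S : comPzSemiRingType) (n : nat)
  (Hidem : add_idempotent S) (Hcanc : mul_cancellative S)
  (Hirr : add_unit_irreducible S)
  (beta : 'I_n -> 'rV[S]_n) (Hinj : injective beta)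
  (Hbasis : is_basis (fun v => exists i, v = beta i)) :
  forall i : 'I_n, exists j : 'I_n,
    beta i 0 j != 0 /\ sr_unit (beta i 0 j) /\
    (forall k : 'I_n, k != j -> beta i 0 k = 0).
Proof.
move=> i; case: Hbasis => indep span.
have S_nt := lin_indep_nontrivial indep (ex_intro _ i erefl).
have /fin_all_exists[carrier carrierP] k : exists i, unit_delta (beta i) k.
  by have [_ [[j ->] bj]] := spanning_unit_delta Hidem Hirr S_nt k span; exists j.
have carrier_inj : injective carrier.
  by move=> k k' eqk; apply: (unit_delta_inj S_nt (carrierP k)); rewrite eqk.
have [carrier_inv _ carrier_invK] := injF_bij carrier_inj.
have [ui zero] := carrierP (carrier_inv i); rewrite carrier_invK in ui zero.
by exists (carrier_inv i); split; first exact: sr_unit_neq0.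
Qed.
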